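(* Let $r\ge1$. Let $B_r$ be the $r\times 2r$ matrix with rows indexed $1,\dots,r$ and columns indexed $0,\dots,2r-1$, whose $(k,c)$ entry is $-1$ if $c=r-k$, $1$ if $c=r-1+k$, and $0$ otherwise. Let $C_r$ be the $r\times(2r+1)$ matrix with rows indexed $1,\dots,r$ and columns indexed $0,\dots,2r$, whose $(k,c)$ entry is $-1$ if $c=r-k$, $1$ if $c=r+k$, and $0$ otherwise. For a partition $\lambda$ with $l(\lambda)\le r$ put $I(\lambda)=\{\lambda_r,\lambda_{r-1}+1,\dots,\lambda_1+r-1\}$, and for a matrix $M$ whose column index set contains $I(\lambda)$ let $\Delta_{I(\lambda)}(M)$ be the $r\times r$ submatrix formed by the columns indexed by $I(\lambda)$ in increasing order. Then: (1) for every partition $\lambda$ with $l(\lambda)\le r$ and $\lambda_1\le r$, $$\det\Delta_{I(\lambda)}(B_r)=\begin{cases}(-1)^{\binom{r+1}2+(|\lambda|+p(\lambda))/2}&\text{if }\lambda\in\mathcal R_r,\\0&\text{otherwise;}\end{cases}$$ (2) for every partition $\lambda$ with $l(\lambda)\le r$ and $\lambda_1\le r+1$, $$\det\Delta_{I(\lambda)}(C_r)=\begin{cases}(-1)^{\binom{r+1}2+|\lambda|/2}&\text{if }\lambda\in\mathcal Q_r,\\0&\text{otherwise.}\end{cases}$$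
   Context: Partitions: a partition $\lambda=(\lambda_1\ge\lambda_2\ge\cdots)$ of nonnegative integers with finitely many nonzero parts; $l(\lambda)$ is the number of nonzero parts, $|\lambda|=\sum_i\lambda_i$. In Frobenius notation $\lambda=(\alpha_1,\dots,\alpha_d\,|\,\beta_1,\dots,\beta_d)$ where $d=p(\lambda)=\#\{i:\lambda_i\ge i\}$, $\alpha_i=\lambda_i-i$, $\beta_i=\lambda'_i-i$ ($\lambda'$ the conjugate partition). For an integer $m\ge0$, $\mathcal Q_m$ is the set of partitions with $l(\lambda)\le m$ of the form $(\alpha_1+1,\dots,\alpha_d+1\,|\,\alpha_1,\dots,\alpha_d)$, and $\mathcal R_m$ is the set of partitions with $l(\lambda)\le m$ of the form $(\alpha_1,\dots,\alpha_d\,|\,\alpha_1,\dots,\alpha_d)$ (the empty partition included in both). *)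

From mathcomp Require Import all_boot all_order all_algebra.
Set Implicit Arguments. Unset Strict Implicit. Unset Printing Implicit Defensive.
Import GRing.Theory Num.Theory.

Definition is_partition (lam : seq nat) : bool :=
  sorted geq lam && all (fun x => 0 < x) lam.

(* lambda_i, for i >= 1 (0 beyond the length) *)
Definition part (lam : seq nat) (i : nat) : nat := nth 0 lam i.-1.

(* l(lambda) = size lam ; |lambda| = sumn lam *)

Definition conjp (lam : seq nat) (i : nat) : nat := count (fun x => i <= x) lam.

(* p(lambda) = #{i >= 1 : lambda_i >= i} *)
Definition durfee (lam : seq nat) : nat :=
  count (fun i => i <= part lam i) (iota 1 (size lam)).

Definition frob_alpha (lam : seq nat) (i : nat) : nat := part lam i - i.
Definition frob_beta (lam : seq nat) (i : nat) : nat := conjp lam i - i.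

(* R_m : l(lambda) <= m and lambda = (a_1..a_d | a_1..a_d) *)
Definition inR (m : nat) (lam : seq nat) : bool :=
  (size lam <= m) &&
  all (fun i => frob_alpha lam i == frob_beta lam i) (iota 1 (durfee lam)).

(* Q_m : l(lambda) <= m and lambda = (a_1+1..a_d+1 | a_1..a_d) *)
Definition inQ (m : nat) (lam : seq nat) : bool :=
  (size lam <= m) &&
  all (fun i => frob_alpha lam i == (frob_beta lam i).+1) (iota 1 (durfee lam)).

Definition Bentry (r k c : nat) : int :=
  if c == r - k then (-1)%R else if c == (r - 1 + k)%N then 1%R else 0%R.
Definition Centry (r k c : nat) : int :=
  if c == r - k then (-1)%R else if c == (r + k)%N then 1%R else 0%R.

(* B_r : r x 2r, C_r : r x (2r+1); row i : 'I_r stands for k = i+1 *)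
Definition Bmx (r : nat) : 'M[int]_(r, (2 * r)%N) :=
  \matrix_(i < r, c < (2 * r)%N) Bentry r i.+1 c.
Definition Cmx (r : nat) : 'M[int]_(r, (2 * r).+1) :=
  \matrix_(i < r, c < (2 * r).+1) Centry r i.+1 c.

(* j-th (0-based) element of I(lambda) in increasing order: lambda_{r-j} + j *)
Definition Icol (lam : seq nat) (r j : nat) : nat := (part lam (r - j) + j)%N.

(* Delta_{I(lambda)}(M): columns of M indexed by I(lambda), increasing order.
   (Out-of-range columns, which never occur under the theorem's hypotheses,
   are filled with 0.) *)
Definition Delta (r n : nat) (M : 'M[int]_(r, n)) (lam : seq nat) : 'M[int]_r :=
  \matrix_(i < r, j < r)
    match (insub (Icol lam r j) : option 'I_n) with
    | Some c => M i c
    | None => 0%R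
    end.

From mathcomp Require Import all_boot all_order all_algebra zify.
Set Implicit Arguments. Unset Strict Implicit. Unset Printing Implicit Defensive.
Import GRing.Theory.

(* B_r and C_r are the cases e = 0 and e = 1 of the r-rowed matrix whose row k
   has -1 in column r - k and 1 in column r - 1 + k + e.  Induct on r and look
   at the minor on the columns I(lambda) of the matrix with r + 1 rows.  If
   lambda_(r+1) = 0, column 0 is selected and holds only the -1 of the last
   row, so the minor is (-1)^(r+1) times the one with r rows.  If
   lambda_(r+1) > 0, the last row meets a selected column only when
   lambda_1 = r + 1 + e; that column holds nothing else, and its complementary
   minor is the one of lambda with its first row and column deleted, whose
   Frobenius coordinates are those of lambda without (alpha_1 | beta_1) =
   (lambda_1 - 1 | l(lambda) - 1).  So the minor survives exactly when
   alpha_i = beta_i + e for all i, and the signs collected along the way sum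
   to binom(r+1, 2) + (|lambda| + (1 - e) p(lambda))/2 modulo 2. *)

Lemma geq_trans : transitive geq.
Proof. exact: rev_trans leq_trans. Qed.

(* (lambda_2 - 1, lambda_3 - 1, ...) without its zeros: lambda with its first
   row and column deleted. *)
Definition strip_hook (lam : seq nat) : seq nat :=
  [seq x.-1 | x <- behead lam & 1 < x].

Lemma nth_pred_filter (s : seq nat) n : sorted geq s ->
  nth 0 [seq x.-1 | x <- s & 1 < x] n = (nth 0 s n).-1.
Proof.
elim: s n => [|x s IHs] n /=; first by rewrite !nth_nil.
move=> xs_sorted; have le_s_x := order_path_min geq_trans xs_sorted.
case: ifP => [_|x_le1]; first by case: n => [|n] //=; rewrite IHs ?(path_sorted xs_sorted).
have -> : [seq y <- s | 1 < y] = [::].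
  by apply/eqP; rewrite -size_eq0 size_filter -leqn0 leqNgt -has_count;
     apply/hasPn => y /(allP le_s_x) /=; lia.
rewrite nth_nil; case: n => [|n] /=; first lia.
have [lt_n_s|le_s_n] := ltnP n (size s); last by rewrite nth_default.
by have := allP le_s_x _ (mem_nth 0 lt_n_s) => /=; lia.
Qed.

Lemma sumn_pred_filter (s : seq nat) : all (fun y => 0 < y) s ->
  sumn s = sumn [seq y.-1 | y <- s & 1 < y] + size s.
Proof. by elim: s => //= y s IHs /andP[y_gt0 /IHs ->]; case: ifP => /=; lia. Qed.

Lemma part_strip_hook lam i : is_partition lam -> 0 < i ->
  part (strip_hook lam) i = (part lam i.+1).-1.
Proof.
case/andP=> lam_sorted _ i_gt0; rewrite /part nth_pred_filter ?nth_behead ?prednK //.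
by case: lam lam_sorted => //= x s /path_sorted.
Qed.

Lemma size_strip_hook lam : size (strip_hook lam) <= (size lam).-1.
Proof. by rewrite size_map size_filter -size_behead count_size. Qed.

Lemma strip_hook_partition lam : is_partition lam -> is_partition (strip_hook lam).
Proof.
case/andP=> lam_sorted _; apply/andP; split.
  apply: (homo_sorted (e := geq)); first by move=> a b /=; lia.
  apply: sorted_filter; first exact: geq_trans.
  by case: lam lam_sorted => //= x s /path_sorted.
by apply/allP => y /mapP[z]; rewrite mem_filter => /andP[z_gt1 _] ->; lia.
Qed.

Lemma sumn_strip_hook x s : is_partition (x :: s) ->
  sumn (x :: s) = x + sumn (strip_hook (x :: s)) + size s.
Proof. by case/andP=> _ /= /andP[_ /sumn_pred_filter ->]; rewrite /strip_hook /=; lia. Qed.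

Lemma conjp1 lam : is_partition lam -> conjp lam 1 = size lam.
Proof.
by case/andP=> _ lam_pos; rewrite -count_predT; apply: eq_in_count => y /(allP lam_pos).
Qed.

Lemma conjp_strip_hook x s i : 0 < i ->
  conjp (strip_hook (x :: s)) i = count (fun y => i < y) s.
Proof.
move=> i_gt0; rewrite /conjp count_map count_filter.
by apply: eq_count => y /=; apply/andP/idP => [[]|]; lia.
Qed.

Lemma durfee_iota lam n : size lam <= n ->
  count (fun i => i <= part lam i) (iota 1 n) = durfee lam.
Proof.
move=> le_lam_n; rewrite -(subnKC le_lam_n) iotaD count_cat.
rewrite (@eq_in_count _ _ pred0 (iota (1 + size lam) _)) ?count_pred0 ?addn0 //.
by move=> i; rewrite mem_iota /part => /andP[lam_lt_i _] /=; rewrite nth_default; lia.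
Qed.

Lemma durfee_strip_hook x s : is_partition (x :: s) ->
  durfee (x :: s) = (durfee (strip_hook (x :: s))).+1.
Proof.
move=> lamP; have x_gt0 : 0 < x by case/andP: lamP => _ /andP[].
rewrite {1}/durfee /= -[iota 2 _]/(iota (1 + 1) _) iotaDl count_map /part /= x_gt0 add1n.
congr S; rewrite -(@durfee_iota _ (size s)) ?(size_strip_hook (x :: s)) //.
apply: eq_in_count => i; rewrite mem_iota => /andP[i_gt0 _] /=.
by rewrite (part_strip_hook lamP i_gt0) /part /=; case: i i_gt0 => //= i _; lia.
Qed.

Lemma part_gt_size lam i : size lam < i -> part lam i = 0.
Proof. by case: i => // i lt_lam_i; rewrite /part nth_default. Qed.

Lemma part_gt0 lam i : is_partition lam -> 0 < i <= size lam -> 0 < part lam i.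
Proof.
case/andP=> _ lam_pos /andP[i_gt0 le_i_lam]; apply: (allP lam_pos).
by rewrite /part mem_nth // prednK.
Qed.

Lemma part_le_part1 lam i : is_partition lam -> 0 < i -> part lam i <= part lam 1.
Proof.
case: lam => [|x s] /andP[lam_sorted _] i_gt0; first by rewrite /part !nth_nil.
have [le_s_i|lt_i_s] := leqP (size s).+1 i.-1; first by rewrite /part nth_default.
rewrite /part /=; case: i.-1 lt_i_s => //= i' lt_i_s.
exact: allP (order_path_min geq_trans lam_sorted) _ (mem_nth 0 lt_i_s).
Qed.

Definition frob_eq (e : bool) lam i := frob_alpha lam i == frob_beta lam i + e.

Definition frob_eqs (e : bool) lam := all (frob_eq e lam) (iota 1 (durfee lam)).

Lemma frob_eq_strip_hook (e : bool) x s i : is_partition (x :: s) -> 0 < i ->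
  frob_eq e (x :: s) i.+1 = frob_eq e (strip_hook (x :: s)) i.
Proof.
move=> lamP i_gt0; case/andP: (lamP) => /(order_path_min geq_trans) le_s_x _.
rewrite /frob_eq /frob_alpha /frob_beta (part_strip_hook lamP i_gt0).
rewrite (conjp_strip_hook x s i_gt0) /conjp /=.
case: (leqP i.+1 x) => [_|x_le_i]; first by apply/eqP/eqP; lia.
rewrite add0n (@eq_in_count _ _ pred0) ?count_pred0; first by apply/eqP/eqP; lia.
by move=> y /(allP le_s_x) /=; lia.
Qed.

Lemma frob_eqs_cons (e : bool) x s : is_partition (x :: s) ->
  frob_eqs e (x :: s) = (x == (size s).+1 + e) && frob_eqs e (strip_hook (x :: s)).
Proof.
move=> lamP; rewrite /frob_eqs durfee_strip_hook //=.
rewrite -[iota 2 _]/(iota (1 + 1) _) iotaDl all_map; congr andb.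
  have x_gt0 : 0 < x by case/andP: lamP => _ /andP[].
  by rewrite /frob_eq /frob_alpha /frob_beta conjp1 // /part /=; apply/eqP/eqP; lia.
apply: eq_in_all => i; rewrite mem_iota => /andP[i_gt0 _] /=.
by rewrite add1n frob_eq_strip_hook.
Qed.

Section DetExpansion.

Local Open Scope ring_scope.

Variables (R : comPzRingType) (n : nat) (A : 'M[R]_n).

Lemma det_row_eq0 i : (forall j, A i j = 0) -> \det A = 0.
Proof. by move=> Ai0; rewrite (expand_det_row _ i) big1 // => j _; rewrite Ai0 mul0r. Qed.

Lemma det_col_eq0 j : (forall i, A i j = 0) -> \det A = 0.
Proof. by move=> Aj0; rewrite (expand_det_col _ j) big1 // => i _; rewrite Aj0 mul0r. Qed.

Lemma expand_det_col1 i0 j : (forall i, i != i0 -> A i j = 0) ->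
  \det A = A i0 j * cofactor A i0 j.
Proof.
move=> Aj0; rewrite (expand_det_col _ j) (bigD1 i0) //= big1 ?addr0 // => i /Aj0 ->.
exact: mul0r.
Qed.

End DetExpansion.

Section BandMinor.

Variable e : bool.

Definition band_entry (r k c : nat) : int :=
  if c == r - k then (-1)%R else if c == r - 1 + k + e then 1%R else 0%R.

Definition band_minor (r : nat) (lam : seq nat) : 'M[int]_r :=
  \matrix_(i < r, j < r) band_entry r i.+1 (Icol lam r j).

Lemma band_entry_shift r k c : 0 < k <= r ->
  band_entry r.+1 k c.+1 = band_entry r k c.
Proof.
move=> k_range; rewrite /band_entry.
have -> : (c.+1 == r.+1 - k) = (c == r - k) by apply/eqP/eqP; lia.
by have -> : (c.+1 == r.+1 - 1 + k + e) = (c == r - 1 + k + e) by apply/eqP/eqP; lia.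
Qed.

Lemma band_entry_eq0 r k c : c != r - k -> c != r - 1 + k + e -> band_entry r k c = 0%R.
Proof. by rewrite /band_entry => /negbTE-> /negbTE->. Qed.

Lemma band_entry_out r k c : 0 < k <= r -> 2 * r + e <= c ->
  band_entry r k c = 0%R.
Proof. by move=> k_range le_c; apply: band_entry_eq0; apply/eqP; lia. Qed.

Lemma band_minor_drop_first_col r lam : size lam <= r ->
  row' ord_max (col' ord0 (band_minor r.+1 lam)) = band_minor r lam.
Proof.
move=> le_lam_r; apply/matrixP => i j; rewrite !mxE lift_max lift0 /Icol subSS addnS.
by rewrite band_entry_shift // ltn_ord.
Qed.

Lemma band_minor_drop_last_col r x s : is_partition (x :: s) -> size s = r ->
  row' ord_max (col' ord_max (band_minor r.+1 (x :: s)))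
  = band_minor r (strip_hook (x :: s)).
Proof.
move=> lamP size_s; apply/matrixP => i j; rewrite !mxE !lift_max /Icol.
have lt_j_r : j < r := ltn_ord j.
rewrite (part_strip_hook lamP) ?subn_gt0 // -subSn 1?ltnW //.
have : 0 < part (x :: s) (r.+1 - j).
  by apply: part_gt0 => //=; rewrite size_s subn_gt0 ltnS (ltnW lt_j_r) leq_subr.
by case: part => //= p _; rewrite addSn band_entry_shift // ltn_ord.
Qed.

Lemma det_band_minor_zero_part r lam : size lam <= r ->
  (\det (band_minor r.+1 lam) = (-1) ^+ r.+1 * \det (band_minor r lam))%R.
Proof.
move=> le_lam_r.
have col0E (i : 'I_r.+1) : band_minor r.+1 lam i ord0 = band_entry r.+1 i.+1 0.
  by rewrite mxE /Icol subn0 addn0 part_gt_size //; lia.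
rewrite (expand_det_col1 (i0 := ord_max) (j := ord0)) => [|i]; last first.
  rewrite -val_eqE /= col0E => i_neq_r.
  by have lt_i_r1 := ltn_ord i; apply: band_entry_eq0; apply/eqP; lia.
rewrite col0E /band_entry subnn eqxx /cofactor band_minor_drop_first_col //=.
by rewrite addn0 mulrA -exprS.
Qed.

Lemma det_band_minor_strip_hook r x s :
  is_partition (x :: s) -> size s = r -> x = r.+1 + e ->
  (\det (band_minor r.+1 (x :: s)) = \det (band_minor r (strip_hook (x :: s))))%R.
Proof.
move=> lamP size_s x_eq; subst x.
have colrE (i : 'I_r.+1) :
    band_minor r.+1 (r.+1 + e :: s) i ord_max = band_entry r.+1 i.+1 (r.+1 + e + r).
  by rewrite mxE /Icol subSnn.
rewrite (expand_det_col1 (i0 := ord_max) (j := ord_max)) => [|i]; last first.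
  rewrite -val_eqE /= colrE => i_neq_r.
  by have lt_i_r1 := ltn_ord i; apply: band_entry_eq0; apply/eqP; lia.
have entry1 : band_entry r.+1 r.+1 (r.+1 + e + r) = 1%R.
  by rewrite /band_entry ifN_eq ?ifT //; apply/eqP; lia.
rewrite colrE /cofactor (band_minor_drop_last_col lamP size_s) /= entry1.
by rewrite addnn -signr_odd odd_double !mul1r.
Qed.

Lemma det_band_minor_short_first_part r lam : is_partition lam -> size lam = r.+1 ->
  part lam 1 <= r + e -> (\det (band_minor r.+1 lam) = 0)%R.
Proof.
move=> lamP size_lam le_lam1; apply: (det_row_eq0 (i := ord_max)) => j; rewrite mxE /Icol.
have lt_j_r1 := ltn_ord j.
have lamj_gt0 : 0 < part lam (r.+1 - j) by apply: part_gt0 => //; lia.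
have lamj_le : part lam (r.+1 - j) <= part lam 1 by apply: part_le_part1; lia.
by rewrite /=; apply: band_entry_eq0; apply/eqP; lia.
Qed.

Lemma det_band_minor_long_first_part r lam : 0 < r -> part lam 1 = r.+1 + e ->
  (\det (band_minor r lam) = 0)%R.
Proof.
case: r => // r _ lam1; apply: (det_col_eq0 (j := ord_max)) => i.
rewrite mxE /Icol subSnn lam1; have lt_i_r1 := ltn_ord i.
by rewrite /=; apply: band_entry_eq0; apply/eqP; lia.
Qed.

Definition sign_exp lam := (sumn lam + (if e then 0 else durfee lam)) %/ 2.

Lemma sign_exp_strip_hook x s : is_partition (x :: s) -> x = (size s).+1 + e ->
  sign_exp (x :: s) = sign_exp (strip_hook (x :: s)) + (size s).+1.
Proof.
move=> lamP x_eq; rewrite /sign_exp sumn_strip_hook // durfee_strip_hook // x_eq.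
by case: e {x_eq lamP}; lia.
Qed.

Lemma det_band_minor r lam : is_partition lam -> size lam <= r -> part lam 1 <= r + e ->
  (\det (band_minor r lam) =
     if frob_eqs e lam then (-1) ^+ ('C(r.+1, 2) + sign_exp lam) else 0)%R.
Proof.
elim: r lam => [|r IHr] lam lamP le_lam_r le_lam1.
  by case: lam lamP le_lam_r le_lam1 => // _ _ _; rewrite det_mx00 /sign_exp; case: e.
have binS2 : 'C(r.+2, 2) = 'C(r.+1, 2) + r.+1 by rewrite binS bin1.
case: lam lamP le_lam_r le_lam1 => [|x s] lamP le_lam_r le_lam1.
  by rewrite det_band_minor_zero_part // IHr //= -exprD binS2 addnCA addnA.
have frob_x := frob_eqs_cons e lamP; rewrite /part /= in le_lam1.
have [lt_s_r|le_r_s] := ltnP (size s) r.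
  rewrite det_band_minor_zero_part //; have [le_x|lt_x] := leqP x (r + e).
    rewrite IHr //; case: ifP => _; last by rewrite mulr0.
    by rewrite -exprD binS2 addnCA addnA.
  have lam1 : part (x :: s) 1 = r.+1 + e by rewrite /part /=; lia.
  rewrite det_band_minor_long_first_part ?mulr0 //; last by lia.
  by rewrite frob_x ifF //; apply/andP => -[/eqP]; lia.
have size_s : size s = r by move: le_lam_r => /=; lia.
have [le_x|lt_x] := leqP x (r + e).
  rewrite det_band_minor_short_first_part //=; last by rewrite size_s.
  by rewrite frob_x ifF //; apply/andP => -[/eqP]; lia.
have x_eq : x = r.+1 + e by lia.
rewrite det_band_minor_strip_hook // IHr; first last.
- rewrite (part_strip_hook lamP) //; have := part_le_part1 lamP (isT : 0 < 2).
  by rewrite /part /=; lia.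
- by have := size_strip_hook (x :: s); rewrite /= size_s.
- exact: strip_hook_partition.
rewrite frob_x size_s -x_eq eqxx /=; case: ifP => // _.
rewrite (sign_exp_strip_hook lamP) ?size_s // binS2 addnACA addnn -mul2n.
by rewrite [in RHS]exprD exprM sqrrN !expr1n mulr1.
Qed.

End BandMinor.

Lemma Delta_Bmx r lam : Delta (Bmx r) lam = band_minor false r lam.
Proof.
apply/matrixP => i j; rewrite !mxE; case: insubP => [c _ <-|].
  by rewrite mxE /Bentry /band_entry addn0.
by rewrite -leqNgt => le_c; rewrite band_entry_out ?addn0 // ltn_ord.
Qed.

Lemma Delta_Cmx r lam : Delta (Cmx r) lam = band_minor true r lam.
Proof.
apply/matrixP => i j; rewrite !mxE; case: insubP => [c _ <-|].
  rewrite mxE /Centry /band_entry.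
  by have -> : r - 1 + i.+1 + true = r + i.+1 by have := ltn_ord i; rewrite addn1; lia.
by rewrite -leqNgt => le_c; rewrite band_entry_out ?addn1 // ltn_ord.
Qed.

Theorem mainTheorem6 (r : nat) (hr : (1 <= r)%N) :
  (forall lam : seq nat, is_partition lam -> (size lam <= r)%N -> (part lam 1 <= r)%N ->
     (\det (Delta (Bmx r) lam))%R =
       (if inR r lam then (-1) ^+ ('C(r.+1, 2) + (sumn lam + durfee lam) %/ 2)
        else 0)%R)
  /\
  (forall lam : seq nat, is_partition lam -> (size lam <= r)%N -> (part lam 1 <= r.+1)%N ->
     (\det (Delta (Cmx r) lam))%R =
       (if inQ r lam then (-1) ^+ ('C(r.+1, 2) + sumn lam %/ 2) else 0)%R).
Proof.
split=> lam lamP le_lam_r le_lam1.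
  rewrite Delta_Bmx det_band_minor ?addn0 // /inR le_lam_r.
  by congr (if _ then _ else _); apply: eq_all => i; rewrite /frob_eq addn0.
rewrite Delta_Cmx det_band_minor ?addn1 // /inQ le_lam_r /sign_exp addn0.
by congr (if _ then _ else _); apply: eq_all => i; rewrite /frob_eq addn1.
Qed.
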